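(* Let $K$ be a non-archimedean local field with normalized valuation $v$ and absolute value $|x|=q^{-v(x)}$, $q$ the cardinality of the residue field. Let $V$ be an $n$-dimensional $K$-vector space with basis $v_1,\dots,v_n$, $\underline n=\{1,\dots,n\}$, and let $N$ be the normalizer in $PGL(V)$ of the image $T$ of the diagonal matrices. Let $\overline{A}$, with its topology and $N$-action, and $\mathcal{S}_c$ and $\varphi$ be as in the context. Then the map $\varphi:\overline{A}\to\mathcal{S}_c$ is an $N$-equivariant homeomorphism.
   Context: A seminorm on $V$ is a map $\gamma:V\to\mathbb{R}_{\ge0}$, not identically zero, with $\gamma(\lambda x)=|\lambda|\gamma(x)$ and $\gamma(x+y)\le\max\{\gamma(x),\gamma(y)\}$. It is canonical with respect to a basis $w_1,\dots,w_n$ if $\gamma(\sum\lambda_iw_i)=\max_i|\lambda_i|\gamma(w_i)$. Two seminorms are equivalent if they differ by a positive real constant factor. $\mathcal{S}'_c$ is the set of seminorms canonical with respect to $v_1,\dots,v_n$, with the topology of pointwise convergence (coarsest topology making $\gamma\mapsto\gamma(x)$ continuous for each $x\in V$), and $\mathcal{S}_c$ is its quotient by equivalence, with the quotient topology. $N$ acts on $\mathcal{S}_c$ by $\gamma\mapsto\gamma\circ n^{-1}$. For each nonempty $I\subseteq\underline{n}$ let $A_I$ be the real vector space generated by $\overline{\eta}^I_i$ ($i\in I$) subject to $\sum_{i\in I}\overline{\eta}^I_i=0$; $A=A_{\underline n}$, $\eta_i=\overline\eta_i^{\underline n}$; $s_I:A\to A_I$ linear with $\eta_i\mapsto\overline{\eta}^I_i$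 for $i\in I$ and $\eta_i\mapsto0$ for $i\notin I$. $\overline{A}$ is the disjoint union of all $A_I$. $N=T\rtimes W$ with $W$ the permutation matrices ($w(v_i)=v_{w(i)}$); $t\in T$ induced by $\mathrm{diag}(d_1,\dots,d_n)$ acts on $A_I$ by translation by $\sum_{i\in I}-v(d_i)\overline{\eta}^I_i$, and $w\in W$ acts by the linear maps $A_I\to A_{w(I)}$, $\overline\eta^I_i\mapsto\overline\eta^{w(I)}_{w(i)}$. Topology on $\overline A$: for nonempty $I\subset\underline{n}$ (strict) let $\Delta_I=\sum_{i\notin I}\mathbb{R}_{\ge0}\eta_i$ and for $U\subset A$ open bounded let $\Gamma^I_U=(U+\Delta_I)\cup\bigcup_{I\subseteq J\subset\underline n,\,J\neq\underline n}s_J(U+\Delta_I)$; a base of the topology consists of the open subsets of $A$ and all $\Gamma^I_U$. The map $\varphi$: for $x=\sum_{i\in I}x_i\overline{\eta}^I_i\in A_I$, $\varphi(x)$ is the class of the seminorm $\gamma(\lambda_1v_1+\dots+\lambda_nv_n)=\max\{|\lambda_i|q^{-x_i}: i\in I\}$ (well defined and bijective $\overline A\to\mathcal S_c$). *)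

From HB Require Import structures.
From mathcomp Require Import all_boot all_order all_algebra all_fingroup.
From mathcomp Require Import all_classical all_reals all_analysis.
Set Implicit Arguments. Unset Strict Implicit. Unset Printing Implicit Defensive.
Import Order.TTheory GRing.Theory Num.Theory numFieldNormedType.Exports.
Local Open Scope ring_scope.
Local Open Scope classical_set_scope.

Section Defs.
Variables (R : realType) (K : fieldType) (v : K -> int) (q : nat).

Definition absv (x : K) : R := if x == 0 then 0 else (q%:R : R) ^ (- v x).

Definition inO (x : K) : Prop := x = 0 \/ (0 <= v x)%R.
Definition inM (x : K) : Prop := x = 0 \/ (1 <= v x)%R.

(* K is a non-archimedean local field with normalized valuation v and residue
   field of cardinality q:
   - v is a discrete valuation on K^x (multiplicative, ultrametric),
   - v is normalized (surjective onto Z: some uniformizer has valuation 1),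
   - the residue field O/m has exactly q elements,
   - K is complete for |.|. *)
Definition nonarch_local_field : Prop :=
  [/\ (forall x y, x != 0 -> y != 0 -> v (x * y) = v x + v y),
      (forall x y, x != 0 -> y != 0 -> x + y != 0 ->
          (Num.min (v x) (v y) <= v (x + y))%R),
      (exists pi : K, pi != 0 /\ v pi = 1),
      (exists r : 'I_q -> K,
          [/\ forall i, inO (r i),
              forall i j, inM (r i - r j) -> i = j &
              forall x, inO x -> exists i, inM (x - r i)]) &
      (forall u : nat -> K,
          (forall e : R, 0 < e -> exists N : nat, forall m k : nat,
              (N <= m)%N -> (N <= k)%N -> absv (u m - u k) < e) ->
          exists l : K, forall e : R, 0 < e -> exists N : nat, forall m : nat,
              (N <= m)%N -> absv (u m - l) < e)].

Variable n : nat.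

Definition bas (i : 'I_n) : 'cV[K]_n := delta_mx i 0.

Definition seminorm (g : 'cV[K]_n -> R) : Prop :=
  [/\ exists x, g x != 0,
      forall x, 0 <= g x,
      forall (l : K) x, g (l *: x) = absv l * g x &
      forall x y, g (x + y) <= Num.max (g x) (g y)].

Definition canonical_seminorm (g : 'cV[K]_n -> R) : Prop :=
  forall lam : 'I_n -> K,
    g (\sum_(i < n) lam i *: bas i) =
    \big[Num.max/0]_(i < n) (absv (lam i) * g (bas i)).

Definition Scp : set ('cV[K]_n -> R) :=
  [set g | seminorm g /\ canonical_seminorm g].

Definition sn_equiv (g g' : 'cV[K]_n -> R) : Prop :=
  exists c : R, 0 < c /\ forall x, g' x = c * g x.

Definition cls (g : 'cV[K]_n -> R) : set ('cV[K]_n -> R) := [set g' | sn_equiv g g'].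

Definition Sc : set (set ('cV[K]_n -> R)) :=
  [set C | exists g, Scp g /\ C = cls g].

(* topology of pointwise convergence on S'_c: the initial topology of the
   evaluations g |-> g x, i.e. generated by the subbasis {g | g x \in O},
   O open in R: a set is open iff around each of its points it contains a
   finite intersection of subbasic sets containing that point. *)
Definition open_Scp (U : set ('cV[K]_n -> R)) : Prop :=
  U `<=` Scp /\
  forall g, U g -> exists (k : nat) (xs : 'I_k -> 'cV[K]_n) (Os : 'I_k -> set R),
    (forall j, open (Os j) /\ Os j (g (xs j))) /\
    (forall g', Scp g' -> (forall j, Os j (g' (xs j))) -> U g').

Definition open_Sc (W : set (set ('cV[K]_n -> R))) : Prop :=
  W `<=` Sc /\ open_Scp [set g | Scp g /\ W (cls g)].

(* A point of A_I (I nonempty) is represented by its unique coordinate vector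
   x with x_i = 0 for i \notin I and sum_{i in I} x_i = 0: the element
   sum_{i in I} x_i eta^I_i.  [nrm I y] is the representative of
   sum_{i in I} y_i eta^I_i for arbitrary coordinates y. *)
Definition nrm (I : {set 'I_n}) (y : 'I_n -> R) : 'I_n -> R :=
  fun i => if i \in I then y i - (\sum_(j in I) y j) / (#|I|%:R) else 0.

Definition Abar : set ({set 'I_n} * ('I_n -> R)) :=
  [set p : {set 'I_n} * ('I_n -> R) | p.1 != (finset.set0 : {set 'I_n}) /\ p.2 = nrm p.1 p.2].

Definition Apts : set ({set 'I_n} * ('I_n -> R)) :=
  [set p : {set 'I_n} * ('I_n -> R) | Abar p /\ p.1 = [set: 'I_n]%SET].

Definition openA (U : set ({set 'I_n} * ('I_n -> R))) : Prop :=
  U `<=` Apts /\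
  forall p, U p -> exists e : R, 0 < e /\
    forall p', Apts p' -> (forall i, `|p'.2 i - p.2 i| < e) -> U p'.

Definition boundedA (U : set ({set 'I_n} * ('I_n -> R))) : Prop :=
  exists M : R, forall p, U p -> forall i, `|p.2 i| <= M.

(* Gamma^I_U = (U + Delta_I) \cup \bigcup_{I <= J strict} s_J(U + Delta_I):
   the points s_J(u + sum_{i \notin I} t_i eta_i), t_i >= 0, u \in U, with
   J = \underline n giving U + Delta_I itself. *)
Definition Gamma (I : {set 'I_n}) (U : set ({set 'I_n} * ('I_n -> R))) :
    set ({set 'I_n} * ('I_n -> R)) :=
  [set p : {set 'I_n} * ('I_n -> R) | Abar p /\ exists J : {set 'I_n},
     [/\ I \subset J, p.1 = J &
       exists u, U u /\ exists t : 'I_n -> R,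
         [/\ forall i, 0 <= t i, forall i, i \in I -> t i = 0 &
             p.2 = nrm J (fun i => u.2 i + t i)]]].

Definition baseAbar (B : set ({set 'I_n} * ('I_n -> R))) : Prop :=
  openA B \/ exists (I : {set 'I_n}) U,
    [/\ I != (finset.set0 : {set 'I_n}), I != [set: 'I_n]%SET, openA U, boundedA U & B = Gamma I U].

Definition open_Abar (W : set ({set 'I_n} * ('I_n -> R))) : Prop :=
  W `<=` Abar /\
  forall p, W p -> exists B, baseAbar B /\ B p /\ B `<=` W.

Definition gam (p : {set 'I_n} * ('I_n -> R)) : 'cV[K]_n -> R :=
  fun x => \big[Num.max/0]_(i in p.1) (absv (x i 0) * (q%:R : R) `^ (- p.2 i)).

Definition phi (p : {set 'I_n} * ('I_n -> R)) : set ('cV[K]_n -> R) := cls (gam p).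

(* element t w of N, t induced by diag(d), w the permutation matrix with
   w(v_i) = v_{s(i)} *)
Definition Nmx (d : 'rV[K]_n) (s : 'S_n) : 'M[K]_n :=
  diag_mx d *m (perm_mx s)^T.

Definition actS (d : 'rV[K]_n) (s : 'S_n) (C : set ('cV[K]_n -> R)) :
    set ('cV[K]_n -> R) :=
  [set (fun x => g (invmx (Nmx d s) *m x)) | g in C].

(* action on Abar: first w (A_I -> A_{w(I)}, eta_i |-> eta_{w(i)}), then
   t (translation by sum_{i in w(I)} -v(d_i) eta_i) *)
Definition actA (d : 'rV[K]_n) (s : 'S_n) (p : {set 'I_n} * ('I_n -> R)) :
    {set 'I_n} * ('I_n -> R) :=
  let I' := s @: p.1 in
  (I', nrm I' (fun j => p.2 ((s^-1)%g j) - (v (d 0 j))%:~R)).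

End Defs.

(* A seminorm gamma canonical for v_1, ..., v_n is determined by its values
   on the basis: gamma(v_i) = q^(-x_i) on its support I and 0 off I.  Reading
   off (I, x) and normalizing x to zero sum (which absorbs the positive scalar
   in S_c) inverts phi.  An element of N multiplies the coordinates by the d_i
   and permutes them, which gives equivariance.  For the topologies, both sides
   have the same neighbourhoods of a point of A_J0 up to an additive shift of
   the coordinates: the (J, z) with J0 <= J, z close to z0 on J0 and z large on
   J \ J0.  In S_c a large z_i means that gamma(v_i) = q^(-z_i) is small, which
   evaluation at finitely many vectors cannot tell from 0; in Abar these are
   exactly the points of the sets Gamma^J0_U. *)

From HB Require Import structures.
From mathcomp Require Import all_boot all_order all_algebra all_fingroup.
From mathcomp Require Import all_classical all_reals all_analysis.
From mathcomp Require Import zify ring lra.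
Import Order.TTheory GRing.Theory Num.Theory numFieldNormedType.Exports.
Set Implicit Arguments. Unset Strict Implicit. Unset Printing Implicit Defensive.
Local Open Scope ring_scope.
Local Open Scope classical_set_scope.

Section NegativePower.
Variables (R : realType) (b : R).
Hypothesis b_gt1 : 1 < b.

Definition npow (r : R) : R := b `^ (- r).
Definition nlog (w : R) : R := - ln w / ln b.

Let lnb_gt0 : 0 < ln b. Proof. exact: ln_gt0. Qed.

Lemma npowE r : npow r = expR (- r * ln b).
Proof. by rewrite /npow /powR gt_eqF // (lt_trans ltr01). Qed.

Lemma npow_gt0 r : 0 < npow r.
Proof. by rewrite npowE expR_gt0. Qed.

Lemma npow_ge0 r : 0 <= npow r.
Proof. exact/ltW/npow_gt0. Qed.

Lemma npowD r s : npow (r + s) = npow r * npow s.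
Proof. by rewrite !npowE -expRD opprD mulrDl. Qed.

Lemma npow0 : npow 0 = 1.
Proof. by rewrite npowE oppr0 mul0r expR0. Qed.

Lemma ltr_npow : {mono npow : r s /~ r < s}.
Proof. by move=> r s; rewrite !npowE ltr_expR ltr_pM2r // ltrN2. Qed.

Lemma ler_npow : {mono npow : r s /~ r <= s}.
Proof. by move=> r s; rewrite !npowE ler_expR ler_pM2r // lerN2. Qed.

Lemma npow_inj : injective npow.
Proof. by move=> r s e; apply/eqP; rewrite eq_le -(ler_npow s) -(ler_npow r) e lexx. Qed.

Lemma nlogK : {in Num.pos, cancel nlog npow}.
Proof.
move=> w w0; rewrite npowE /nlog mulNr divfK ?gt_eqF //.
by rewrite opprK lnK.
Qed.

Lemma npowN r : npow (- r) = (npow r)^-1.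
Proof.
apply: (mulfI (lt0r_neq0 (npow_gt0 r))).
by rewrite -npowD subrr npow0 mulfV // lt0r_neq0 // npow_gt0.
Qed.

Lemma npow_near1 eta : 0 < eta ->
  exists2 d, 0 < d & forall t, `|t| < d -> `|npow t - 1| < eta.
Proof.
move=> eta0; have e1 : 0 < 1 + eta by lra.
exists (- nlog (1 + eta)).
  by rewrite /nlog mulNr opprK divr_gt0 // ln_gt0 // ltrDl.
move=> t; rewrite ltr_norml => /andP[lo hi].
have up : npow t < 1 + eta.
  by rewrite -[1 + eta]nlogK ?posrE // ltr_npow; lra.
have down : (1 + eta)^-1 < npow t.
  by rewrite -[1 + eta]nlogK ?posrE // -npowN ltr_npow.
have : 1 - eta <= (1 + eta)^-1 by rewrite -div1r ler_pdivlMr //; nra.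
by rewrite ltr_norml; lra.
Qed.

End NegativePower.

Section Valuation.
Variables (K : fieldType) (v : K -> int).
Hypothesis vM : forall x y, x != 0 -> y != 0 -> v (x * y) = v x + v y.
Hypothesis vD : forall x y, x != 0 -> y != 0 -> x + y != 0 ->
  Num.min (v x) (v y) <= v (x + y).

Lemma valuation1 : v 1 = 0.
Proof.
have := vM (oner_neq0 K) (oner_neq0 K); rewrite mulr1 => h.
by apply: (@addrI _ (v 1)); rewrite addr0 -h.
Qed.

Lemma valuationN x : x != 0 -> v (- x) = v x.
Proof.
have N1 : (-1 : K) != 0 by rewrite oppr_eq0 oner_neq0.
have vN1 : v (-1) = 0.
  have := vM N1 N1; rewrite mulrNN mulr1 valuation1 => /eqP.
  by rewrite eq_sym -mulr2n mulrn_eq0 => /eqP.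
by move=> x0; rewrite -mulN1r vM // vN1 add0r.
Qed.

Lemma inMN x : inM v x -> inM v (- x).
Proof.
case=> [->|vx]; first by rewrite oppr0; left.
by have [->|x0] := eqVneq x 0; [rewrite oppr0; left | right; rewrite valuationN].
Qed.

Lemma inMD x y : inM v x -> inM v y -> inM v (x + y).
Proof.
case=> [->|vx]; first by rewrite add0r.
case=> [->|vy]; first by rewrite addr0; right.
have [->|s0] := eqVneq (x + y) 0; first by left.
have [->|x0] := eqVneq x 0; first by rewrite add0r; right.
have [->|y0] := eqVneq y 0; first by rewrite addr0; right.
by right; apply: le_trans (vD x0 y0 s0); rewrite le_min vx.
Qed.

Lemma residue_card_gt1 (q : nat) :
  (exists r : 'I_q -> K, [/\ forall i, inO v (r i),
     forall i j, inM v (r i - r j) -> i = j &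
     forall x, inO v x -> exists i, inM v (x - r i)]) -> (1 < q)%N.
Proof.
case=> r [_ _ r_surj].
have [i hi] : exists i, inM v (0 - r i) by apply: r_surj; left.
have [j hj] : exists j, inM v (1 - r j) by apply: r_surj; right; rewrite valuation1.
suff : i != j.
  apply: contraNT; rewrite -leqNgt => q1; apply/eqP/ord_inj.
  by move: (ltn_ord i) (ltn_ord j) q1; lia.
apply: contraPneq (inMD hj (inMN hi)) => <-.
rewrite sub0r opprK subrK /inM valuation1 => -[/eqP|//]; by rewrite oner_eq0.
Qed.

End Valuation.

Section Normalization.
Variables (R : realType) (n : nat).
Implicit Types (J : {set 'I_n}) (y z : 'I_n -> R) (p : {set 'I_n} * ('I_n -> R)).

Definition mean J y : R := (\sum_(j in J) y j) / #|J|%:R.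

Lemma nrmE J y i : nrm J y i = if i \in J then y i - mean J y else 0.
Proof. by []. Qed.

Lemma subset_neq0 J0 J : J0 \subset J -> J0 != finset.set0 -> J != finset.set0.
Proof.
by move=> sJ /set0Pn[j jJ0]; apply/set0Pn; exists j; exact: (fintype.subsetP sJ).
Qed.

Lemma card_set_neq0 J : J != finset.set0 -> #|J|%:R != 0 :> R.
Proof. by move=> /set0Pn[i iJ]; rewrite pnatr_eq0 -lt0n; apply/card_gt0P; exists i. Qed.

Lemma nrm_eq_shift J y z c : (forall i, i \in J -> z i = y i + c) -> nrm J z = nrm J y.
Proof.
move=> zy; apply: funext => i; rewrite !nrmE; case: ifP => // iJ.
have J0 : J != finset.set0 by apply/set0Pn; exists i.
rewrite /mean (eq_bigr _ zy) big_split /= sumr_const mulrDl zy //.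
by rewrite -[c *+ _]mulr_natr mulfK ?card_set_neq0 // opprD addrACA subrr addr0.
Qed.

Lemma nrm_id J y : nrm J (nrm J y) = nrm J y.
Proof. by apply: (nrm_eq_shift (c := - mean J y)) => i iJ; rewrite nrmE iJ. Qed.

Lemma eq_nrm_shift J y z : nrm J z = nrm J y ->
  forall i, i \in J -> z i = y i + (mean J z - mean J y).
Proof. by move=> /(congr1 (fun f => f _)) e i iJ; move: (e i); rewrite !nrmE iJ; lra. Qed.

Lemma nrm_lipschitz J y z (d : R) : J != finset.set0 ->
  (forall j, j \in J -> `|z j - y j| < d) -> forall i, `|nrm J z i - nrm J y i| < d *+ 2.
Proof.
move=> J0 zy i; have /set0Pn[j0 j0J] := J0.
have d0 : 0 < d by apply: le_lt_trans (zy j0 j0J).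
rewrite !nrmE; case: ifP => iJ; last by rewrite subrr normr0 mulrn_wgt0.
have mean_zy : `|mean J z - mean J y| <= d.
  rewrite /mean -mulrBl -sumrB normrM normfV normr_nat ler_pdivrMr; last first.
    by rewrite lt0r card_set_neq0 // ler0n.
  apply: le_trans (ler_norm_sum _ _ _) _.
  by rewrite mulr_natr -sumr_const ler_sum // => j /zy /ltW.
rewrite (_ : _ - _ - _ = z i - y i - (mean J z - mean J y)); last by ring.
have := ler_normB (z i - y i) (mean J z - mean J y).
have := zy i iJ; rewrite mulr2n; lra.
Qed.

Lemma Abar_nrm p : Abar p -> nrm p.1 p.2 = p.2.
Proof. by case=> _ <-. Qed.

End Normalization.

Section AbarTopology.
Variables (R : realType) (n : nat).
Implicit Types (J : {set 'I_n}) (w y z : 'I_n -> R) (p : {set 'I_n} * ('I_n -> R))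
  (B U : set ({set 'I_n} * ('I_n -> R))).

Definition close_to (dl M : R) J0 z0 J z : Prop :=
  [/\ J0 \subset J, forall i, i \in J0 -> `|z i - z0 i| < dl &
      forall i, i \in J -> i \notin J0 -> M < z i].

Definition ballA (c : 'I_n -> R) (r : R) : set ({set 'I_n} * ('I_n -> R)) :=
  [set p | Apts p /\ exists2 e, 0 < e & forall i, `|p.2 i - c i| < r - e].

Lemma openA_ballA c r : openA (ballA c r).
Proof.
split=> [_ [] //|p [_ [e e0 pc]]]; exists (e / 2); split=> [|p' Ap' p'p].
  by rewrite divr_gt0.
split=> //; exists (e / 2) => [|i]; first by rewrite divr_gt0.
by have := ler_distD (p.2 i) (p'.2 i) (c i); have := pc i; have := p'p i; lra.
Qed.

Lemma boundedA_ballA c r : boundedA (ballA c r).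
Proof.
exists (\big[Num.max/0]_i `|c i| + r) => p [_ [e e0 pc]] i.
have := ler_normD (p.2 i - c i) (c i); rewrite subrK.
by have := le_bigmax 0 (fun i => `|c i|) i; have := pc i; lra.
Qed.

Lemma ballA_center p r : Apts p -> 0 < r -> ballA p.2 r p.
Proof.
by move=> Ap r0; split=> //; exists (r / 2) => [|i]; rewrite ?divr_gt0 // subrr normr0; lra.
Qed.

Lemma ballA_close_nbhd p dl M : Apts p -> 0 < dl ->
  exists B, [/\ openA B, B p & forall p', B p' ->
    exists c, close_to dl M p.1 p.2 p'.1 (fun i => p'.2 i + c)].
Proof.
move=> Ap dl0; exists (ballA p.2 dl); split; [exact: openA_ballA | exact: ballA_center|].
move=> p' [[_ p'T] [e e0 p'p]]; exists 0; have [_ pT] := Ap.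
split=> [|i _|i _]; rewrite ?pT ?p'T ?subxx ?inE // addr0.
by have := p'p i; lra.
Qed.

Lemma Gamma_close_nbhd p dl M : Abar p -> p.1 != [set: 'I_n]%SET -> 0 < dl ->
  exists U, [/\ openA U, boundedA U, Gamma p.1 U p & forall p', Gamma p.1 U p' ->
    exists c, close_to dl M p.1 p.2 p'.1 (fun i => p'.2 i + c)].
Proof.
move=> Ap pT dl0; set J := p.1; have [J0 _] := Ap.
(* Off J the centre of U sits at height M + dl, so every point of Gamma^J_U
   is above M there. *)
pose y i := if i \in J then p.2 i else M + dl.
pose u0 := ([set: 'I_n]%SET, nrm [set: 'I_n] y).
have u0E i : u0.2 i = y i - mean [set: 'I_n] y by rewrite /= nrmE inE.
have Au0 : Apts u0.
  by do 2?split; [exact: subset_neq0 (finset.subsetT J) J0 | rewrite /= nrm_id].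
exists (ballA u0.2 dl); split; [exact: openA_ballA | exact: boundedA_ballA | |].
  split=> //; exists J; split=> //; exists u0; split; first exact: ballA_center.
  exists (fun=> 0); split=> // ; rewrite -[LHS](Abar_nrm Ap) -/J.
  apply/esym/(nrm_eq_shift (c := - mean [set: 'I_n] y)) => i iJ.
  by rewrite u0E addr0 /y iJ.
move=> p' [_ [J' [sJ -> [u [[_ [e e0 uu0]] [t [t0 tJ ->]]]]]]].
exists (mean J' (fun i => u.2 i + t i) + mean [set: 'I_n] y).
split=> // i iJ.
  have := uu0 i; rewrite u0E /y nrmE (fintype.subsetP sJ i iJ) iJ tJ //.
  by rewrite !ltr_norml => /andP[? ?]; apply/andP; split; lra.
move=> /negPf niJ; have := uu0 i; rewrite u0E /y nrmE iJ niJ ltr_norml.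
by move=> /andP[? ?]; have := t0 i; lra.
Qed.

Lemma baseAbar_sub B : baseAbar B -> B `<=` @Abar R n.
Proof. by case=> [[BA _] p /BA []|[I [U [_ _ _ _ ->]]] p []]. Qed.

Lemma Abar_close_nbhd p dl M : Abar p -> 0 < dl ->
  exists B, [/\ baseAbar B, B p & forall p', B p' ->
    exists c, close_to dl M p.1 p.2 p'.1 (fun i => p'.2 i + c)].
Proof.
move=> Ap dl0; have [pT|pT] := eqVneq p.1 [set: 'I_n]%SET.
  have [B [oB Bp Bc]] := ballA_close_nbhd M (conj Ap pT) dl0.
  by exists B; split=> //; left.
have [U [oU bU GUp GUc]] := Gamma_close_nbhd M Ap pT dl0.
exists (Gamma p.1 U); split=> //; right; exists p.1, U; split=> //.
by case: Ap.
Qed.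

Lemma openA_nrm U (w0 : 'I_n -> R) :
  openA U -> U ([set: 'I_n]%SET, nrm [set: 'I_n] w0) ->
  exists2 dl, 0 < dl & forall w, (forall i, `|w i - w0 i| < dl) ->
    U ([set: 'I_n]%SET, nrm [set: 'I_n] w).
Proof.
move=> [UA oU] Uw0; have [e [e0 eU]] := oU _ Uw0; have [[T0 _] _] := UA _ Uw0.
exists (e / 2) => [|w ww0]; first by rewrite divr_gt0.
apply: eU => [|i]; first by split; [split=> //; rewrite /= nrm_id|].
by have := nrm_lipschitz T0 (fun j _ => ww0 j) i; rewrite /= mulr2n; lra.
Qed.

Lemma openA_contains_close B J0 z0 : openA B -> B (J0, nrm J0 z0) ->
  exists dl M, 0 < dl /\ forall J z, close_to dl M J0 z0 J z -> B (J, nrm J z).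
Proof.
move=> oB Bp; have [_ /= J0T] := oB.1 _ Bp; subst J0.
have [dl dl0 dlB] := openA_nrm oB Bp; exists dl, 0; split=> // J z [sJ zz0 _].
have -> : J = [set: 'I_n]%SET by apply/eqP; rewrite finset.eqEsubset finset.subsetT.
by apply: dlB => i; apply: zz0; rewrite inE.
Qed.

Lemma Gamma_contains_close I U J0 z0 : openA U -> Gamma I U (J0, nrm J0 z0) ->
  exists dl M, 0 < dl /\ forall J z, close_to dl M J0 z0 J z -> Gamma I U (J, nrm J z).
Proof.
move=> oU [[J00 _] [J1 [sI /= eJ1 [u0 [Uu0 [t0 [t00 t0I e0]]]]]]]; subst J1.
have Uu0' : U ([set: 'I_n]%SET, nrm [set: 'I_n] u0.2).
  by have [[_ u0n] u0T] := oU.1 _ Uu0; rewrite -u0T -u0n -surjective_pairing.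
have [dl dl0 dlU] := openA_nrm oU Uu0'.
set c := mean J0 z0 - mean J0 (fun i => u0.2 i + t0 i).
have z0E := eq_nrm_shift e0.
exists dl, (c + \big[Num.max/0]_i `|u0.2 i|); split=> // J z [sJ zz0 zM].
(* Split z - c as w + t with w near u0 and t >= 0 taking up the large
   coordinates off J0. *)
pose w i := if i \in J0 then z i - c - t0 i else u0.2 i.
pose t i := if i \in J0 then t0 i else if i \in J then z i - c - u0.2 i else 0.
split; first by split; [exact: subset_neq0 sJ J00 | rewrite /= nrm_id].
exists J; split=> //; first exact: fintype.subset_trans sI sJ.
exists ([set: 'I_n]%SET, nrm [set: 'I_n] w); split.
  apply: dlU => i; rewrite /w; case: ifP => iJ0; last by rewrite subrr normr0.
  rewrite (_ : _ - _ - _ - _ = z i - (u0.2 i + t0 i + c)); last by ring.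
  by have := zz0 i iJ0; rewrite z0E.
exists t; split=> [i|i iI|].
- rewrite /t; case: ifP => // iJ0; case: ifP => // iJ.
  have := zM i iJ (negbT iJ0); have := le_bigmax 0 (fun i => `|u0.2 i|) i.
  by have := ler_norm (u0.2 i); lra.
- by rewrite /t (fintype.subsetP sI i iI) t0I.
apply/esym/(nrm_eq_shift (c := - c - mean [set: 'I_n] w)) => i iJ.
by rewrite /= nrmE inE /w /t; case: ifP => _; rewrite ?iJ; ring.
Qed.

Lemma baseAbar_contains_close B J0 z0 : baseAbar B -> B (J0, nrm J0 z0) ->
  exists dl M, 0 < dl /\ forall J z, close_to dl M J0 z0 J z -> B (J, nrm J z).
Proof.
case=> [oB|[I [U [_ _ oU _ ->]]]]; first exact: openA_contains_close.
exact: Gamma_contains_close.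
Qed.

End AbarTopology.

Section MonomialMatrices.
Variables (R : realType) (K : fieldType) (n : nat) (d : 'rV[K]_n) (s : 'S_n).
Hypothesis d_neq0 : forall j, d 0 j != 0.

Lemma invmx_Nmx : invmx (Nmx d s) = perm_mx s *m diag_mx (\row_j (d 0 j)^-1).
Proof.
have NM : Nmx d s *m (perm_mx s *m diag_mx (\row_j (d 0 j)^-1)) = 1%:M.
  rewrite /Nmx mulmxA -(mulmxA (diag_mx d)) tr_perm_mx -perm_mxM mulVg perm_mx1.
  rewrite mulmx1 mulmx_diag -diag_const_mx; congr diag_mx; apply/matrixP => i j.
  by rewrite !mxE mulfV.
have [Nu _] := mulmx1_unit NM.
by rewrite -[RHS](mulKmx Nu) NM mulmx1.
Qed.

Lemma invmx_Nmx_coord (x : 'cV[K]_n) j :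
  (invmx (Nmx d s) *m x) j 0 = x (s j) 0 / d 0 (s j).
Proof.
by rewrite invmx_Nmx -mulmxA -row_permE mxE mul_diag_mx !mxE mulrC.
Qed.

Lemma actS_cls (g : 'cV[K]_n -> R) :
  actS d s (cls g) = cls (fun x => g (invmx (Nmx d s) *m x)).
Proof.
apply/seteqP; split => h.
  by case=> g' [c [c0 g'g]] <-; exists c; split => // x; rewrite g'g.
case=> c [c0 hg]; exists (fun x => c * g x); first by exists c.
by apply: funext => x; rewrite hg.
Qed.

End MonomialMatrices.

Section Seminorms.
Variables (R : realType) (K : fieldType) (v : K -> int) (q : nat).
Hypothesis vM : forall x y, x != 0 -> y != 0 -> v (x * y) = v x + v y.
Hypothesis vD : forall x y, x != 0 -> y != 0 -> x + y != 0 ->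
  Num.min (v x) (v y) <= v (x + y).
Hypothesis q_gt1 : (1 < q)%N.
Variable n : nat.

Local Notation b := (q%:R : R).
Local Notation av := (absv R v q).
Local Notation gam := (gam v q).

Let b_gt1 : 1 < b. Proof. by rewrite ltr1n. Qed.

Lemma absv0 : av 0 = 0.
Proof. by rewrite /absv eqxx. Qed.

Lemma absvE x : x != 0 -> av x = npow b (v x)%:~R.
Proof. by move=> x0; rewrite /absv (negPf x0) /npow -intrN powR_intmul. Qed.

Lemma absv_ge0 x : 0 <= av x.
Proof. by have [->|x0] := eqVneq x 0; rewrite ?absv0 ?absvE ?npow_ge0. Qed.

Lemma absv1 : av 1 = 1.
Proof. by rewrite absvE ?oner_neq0 // valuation1 // npow0. Qed.

Lemma absvM x y : av (x * y) = av x * av y.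
Proof.
have [->|x0] := eqVneq x 0; first by rewrite mul0r absv0 mul0r.
have [->|y0] := eqVneq y 0; first by rewrite mulr0 absv0 mulr0.
by rewrite !absvE ?mulf_neq0 // vM // intrD npowD.
Qed.

Lemma absvV x : x != 0 -> av (x^-1) = npow b (- (v x)%:~R).
Proof.
move=> x0; apply: (@mulfI _ (av x)); first by rewrite absvE // lt0r_neq0 ?npow_gt0.
by rewrite -absvM mulfV // absv1 absvE // -npowD // subrr npow0.
Qed.

Lemma absvD x y : av (x + y) <= Num.max (av x) (av y).
Proof.
have [->|x0] := eqVneq x 0; first by rewrite add0r absv0 le_max lexx orbT.
have [->|y0] := eqVneq y 0; first by rewrite addr0 absv0 le_max lexx.
have [->|s0] := eqVneq (x + y) 0; first by rewrite absv0 le_max absv_ge0.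
by rewrite !absvE // le_max !ler_npow // !ler_int -ge_min vD.
Qed.

Implicit Types (J : {set 'I_n}) (y z : 'I_n -> R) (p : {set 'I_n} * ('I_n -> R))
  (x : 'cV[K]_n) (g : 'cV[K]_n -> R).

Lemma gam_ge0 p x : 0 <= gam p x.
Proof. exact: bigmax_ge_id. Qed.

Lemma gam_le J z x c : 0 <= c ->
  (forall i, i \in J -> av (x i 0) * npow b (z i) <= c) -> gam (J, z) x <= c.
Proof. exact: bigmax_le. Qed.

Lemma gam_lt J z x c : 0 < c ->
  (forall i, i \in J -> av (x i 0) * npow b (z i) < c) -> gam (J, z) x < c.
Proof. exact: bigmax_lt. Qed.

Lemma le_gam J z x i : i \in J -> av (x i 0) * npow b (z i) <= gam (J, z) x.
Proof. exact: (le_bigmax_cond _ (fun i => av (x i 0) * npow b (z i))). Qed.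

Lemma gam_scale p (l : K) x : gam p (l *: x) = av l * gam p x.
Proof.
have lmax r s : av l * Num.max r s = Num.max (av l * r) (av l * s).
  exact/maxr_pMr/absv_ge0.
rewrite /gam (big_endo _ lmax (mulr0 _)).
by apply: eq_bigr => i _; rewrite mxE absvM mulrA.
Qed.

Lemma gam_shift J z c x : gam (J, fun i => z i + c) x = npow b c * gam (J, z) x.
Proof.
have cmax r s : npow b c * Num.max r s = Num.max (npow b c * r) (npow b c * s).
  exact/maxr_pMr/npow_ge0.
rewrite /gam (big_endo _ cmax (mulr0 _)).
apply: eq_bigr => i _.
by rewrite -/(npow b (z i + c)) -/(npow b (z i)) npowD // mulrA mulrC.
Qed.

Lemma gam_eq_on J y z : (forall i, i \in J -> z i = y i) -> gam (J, z) = gam (J, y).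
Proof. by move=> zy; apply: funext => x; apply: eq_bigr => i /zy /= ->. Qed.

Lemma gam_bas p i : gam p (bas K i) = if i \in p.1 then npow b (p.2 i) else 0.
Proof.
case: p => J z /=.
have bas_coef j : av (bas K i j 0) = (j == i)%:R.
  by rewrite mxE eqxx andbT; case: eqP; rewrite ?absv1 ?absv0.
apply/eqP; rewrite eq_le; apply/andP; split.
  apply: gam_le => [|j jJ]; first by case: ifP; rewrite ?npow_ge0.
  rewrite bas_coef; case: (eqVneq j i) => [<-|_]; first by rewrite jJ mul1r.
  by rewrite mul0r; case: ifP; rewrite ?npow_ge0.
case: ifP => iJ; last exact: gam_ge0.
by have := le_gam z (bas K i) iJ; rewrite bas_coef eqxx mul1r.
Qed.

Lemma sum_bas (lam : 'I_n -> K) : \sum_(i < n) lam i *: bas K i = \col_i lam i.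
Proof.
apply/matrixP => i j; rewrite ord1 summxE (bigD1 i) //= big1 ?addr0.
  by rewrite !mxE eqxx mulr1.
by move=> k ki; rewrite !mxE eq_sym (negPf ki) mulr0.
Qed.

Lemma seminorm_gam p : p.1 != finset.set0 -> seminorm v q (gam p).
Proof.
case: p => J z /=; case/set0Pn => i0 i0J; split.
- by exists (bas K i0); rewrite gam_bas i0J lt0r_neq0 ?npow_gt0.
- exact: gam_ge0.
- exact: gam_scale.
move=> x y; apply: gam_le => [|i iJ]; first by rewrite le_max gam_ge0.
rewrite mxE; apply: le_trans (ler_wpM2r (npow_ge0 b_gt1 _) (absvD _ _)) _.
by rewrite maxr_pMl ?npow_ge0 // ge_max !le_max !le_gam ?orbT.
Qed.

Lemma canonical_gam p : canonical_seminorm v q (gam p).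
Proof.
case: p => J z lam; rewrite sum_bas; apply/eqP; rewrite eq_le; apply/andP; split.
  apply: gam_le => [|i iJ]; first exact: bigmax_ge_id.
  apply: le_trans (le_bigmax _ (fun i => av (lam i) * gam (J, z) (bas K i)) i).
  by rewrite gam_bas iJ mxE.
apply: bigmax_le => [|i _]; first exact: gam_ge0.
rewrite gam_bas; case: ifP => iJ; last by rewrite mulr0 gam_ge0.
by have := le_gam z (\col_i lam i) iJ; rewrite mxE.
Qed.

Lemma Scp_gam p : p.1 != finset.set0 -> Scp v q (gam p).
Proof. by move=> J0; split; [exact: seminorm_gam | exact: canonical_gam]. Qed.

Lemma cls_refl g : cls g g.
Proof. by exists 1; split => // x; rewrite mul1r. Qed.

Lemma cls_scale g g' c : 0 < c -> (forall x, g' x = c * g x) -> cls g' = cls g.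
Proof.
move=> c0 g'g; apply/seteqP; split => f [d [d0 fg']].
  by exists (d * c); split => [|x]; rewrite ?mulr_gt0 // fg' g'g mulrA.
exists (d / c); split => [|x]; first by rewrite divr_gt0.
by rewrite fg' g'g mulrA divfK // gt_eqF.
Qed.

Lemma cls_gam_shift J z c : cls (gam (J, fun i => z i + c)) = cls (gam (J, z)).
Proof. by apply: (cls_scale (npow_gt0 b_gt1 c)) => x; rewrite gam_shift. Qed.

Lemma cls_gam_nrm J z : cls (gam (J, nrm J z)) = cls (gam (J, z)).
Proof.
rewrite -(cls_gam_shift J z (- mean J z)); congr cls.
by apply: gam_eq_on => i iJ; rewrite nrmE iJ.
Qed.

Lemma cls_gam_shiftP p p' : cls (gam p) (gam p') ->
  p'.1 = p.1 /\ exists c, forall i, i \in p.1 -> p'.2 i = p.2 i + c.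
Proof.
case=> c [c0 gp'].
have gbas i : (if i \in p'.1 then npow b (p'.2 i) else 0)
              = c * (if i \in p.1 then npow b (p.2 i) else 0).
  by rewrite -!gam_bas gp'.
have eJ : p'.1 = p.1.
  apply/setP => i; have := gbas i.
  case: (i \in p'.1); case: (i \in p.1); rewrite ?mulr0 //.
    by move/eqP; rewrite gt_eqF ?npow_gt0.
  by move/esym/eqP; rewrite mulf_eq0 !gt_eqF ?npow_gt0.
split => //; exists (nlog b c) => i iJ; apply: (npow_inj b_gt1).
by have := gbas i; rewrite eJ iJ -{1}[c](nlogK b_gt1) ?posrE // -npowD // addrC.
Qed.

Lemma Sc_phi p : Abar p -> Sc v q (phi v q p).
Proof. by case=> J0 _; exists (gam p); split => //; exact: Scp_gam. Qed.

Lemma phi_inj p p' : Abar p -> Abar p' -> phi v q p = phi v q p' -> p = p'.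
Proof.
move=> Ap Ap' e; have /cls_gam_shiftP[eJ [c hc]] : cls (gam p) (gam p').
  by rewrite -/(phi v q p) e; exact: cls_refl.
case: p p' Ap Ap' eJ hc {e} => [J y] [J' y'] Ap Ap' /= eJ hc; subst J'; congr pair.
have /= ey := Abar_nrm Ap; have /= ey' := Abar_nrm Ap'.
by rewrite -ey -ey' (nrm_eq_shift hc).
Qed.

Definition bsupp g : {set 'I_n} := [set i | g (bas K i) != 0].
Definition bcoord g : 'I_n -> R := fun i => nlog b (g (bas K i)).
Definition phi_inv g : {set 'I_n} * ('I_n -> R) := (bsupp g, nrm (bsupp g) (bcoord g)).

Lemma bcoordK g i : Scp v q g -> i \in bsupp g -> npow b (bcoord g i) = g (bas K i).
Proof. by case=> -[_ g0 _ _] _; rewrite inE => gi; rewrite nlogK // posrE lt_def gi g0. Qed.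

Lemma Scp_gamE g : Scp v q g -> g = gam (bsupp g, bcoord g).
Proof.
move=> sg; have [[_ g0 _ _] gc] := sg; apply: funext => x.
have -> : x = \sum_(i < n) x i 0 *: bas K i.
  by rewrite sum_bas; apply/matrixP => i j; rewrite ord1 mxE.
rewrite gc canonical_gam; apply: eq_bigr => i _ /=.
rewrite gam_bas /= inE; case: (eqVneq (g (bas K i)) 0) => [->|gi] //.
by rewrite bcoordK // inE gi.
Qed.

Lemma bsupp_neq0 g : Scp v q g -> bsupp g != finset.set0.
Proof.
move=> sg; have [[[x gx] _ _ _] _] := sg; apply: contra gx => /eqP bs0.
rewrite (Scp_gamE sg) bs0 eq_le gam_ge0 andbT.
by apply: gam_le => // i; rewrite inE.
Qed.

Lemma Abar_phi_inv g : Scp v q g -> Abar (phi_inv g).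
Proof. by move=> sg; split; [exact: bsupp_neq0 | rewrite /= nrm_id]. Qed.

Lemma phi_invK g : Scp v q g -> phi v q (phi_inv g) = cls g.
Proof. by move=> sg; rewrite /phi cls_gam_nrm -(Scp_gamE sg). Qed.

Lemma gam_imset (s : 'S_n) J z x : gam ([set s j | j in J]%SET, z) x =
  \big[Num.max/0]_(i in J) (av (x (s i) 0) * npow b (z (s i))).
Proof.
apply/eqP; rewrite eq_le; apply/andP; split.
  apply: gam_le => [|_ /imsetP[i iJ ->]]; first exact: bigmax_ge_id.
  exact: (le_bigmax_cond _ (fun i => av (x (s i) 0) * npow b (z (s i))) iJ).
apply: bigmax_le => [|i iJ]; first exact: gam_ge0.
by apply: le_gam; rewrite mem_imset //; exact: perm_inj.
Qed.

Lemma phi_actA (d : 'rV[K]_n) (s : 'S_n) p : (forall j, d 0 j != 0) ->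
  phi v q (actA v d s p) = actS d s (phi v q p).
Proof.
move=> d0; rewrite /phi /actA cls_gam_nrm actS_cls //; congr cls.
apply: funext => x; rewrite gam_imset; apply: eq_bigr => i _.
by rewrite invmx_Nmx_coord // permK absvM absvV // -mulrA -npowD // addrC.
Qed.

Lemma gam_close_terms J0 z0 J z x (eps : R) : 0 < eps -> J0 \subset J ->
  (forall i, i \in J0 ->
     `|av (x i 0) * npow b (z i) - av (x i 0) * npow b (z0 i)| < eps) ->
  (forall i, i \in J -> i \notin J0 -> av (x i 0) * npow b (z i) < eps) ->
  `|gam (J, z) x - gam (J0, z0) x| < eps.
Proof.
move=> eps0 sJ near0 small; rewrite ltr_norml; apply/andP; split.
  suff : gam (J0, z0) x < gam (J, z) x + eps by lra.
  apply: gam_lt => [|i iJ0]; first by have := gam_ge0 (J, z) x; lra.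
  have := near0 i iJ0; rewrite ltr_norml => /andP[lo _].
  by have := le_gam z x (fintype.subsetP sJ i iJ0); lra.
suff : gam (J, z) x < gam (J0, z0) x + eps by lra.
apply: gam_lt => [|i iJ]; first by have := gam_ge0 (J0, z0) x; lra.
have [iJ0|niJ0] := boolP (i \in J0).
  have := near0 i iJ0; rewrite ltr_norml => /andP[_ hi].
  by have := le_gam z0 x iJ0; lra.
by have := small i iJ niJ0; have := gam_ge0 (J0, z0) x; lra.
Qed.

Lemma gam_close J0 z0 (B eps : R) : 0 < B -> 0 < eps ->
  exists dl M, 0 < dl /\ forall J z x, close_to dl M J0 z0 J z ->
    (forall i, av (x i 0) <= B) -> `|gam (J, z) x - gam (J0, z0) x| < eps.
Proof.
move=> B0 eps0; pose Z := \big[Num.max/1]_i npow b (z0 i).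
have Z0 : 0 < Z by apply: lt_le_trans (bigmax_ge_id _ _ _ _).
have [dl dl0 dl1] := npow_near1 b_gt1 (divr_gt0 eps0 (mulr_gt0 B0 Z0)).
exists dl, (nlog b (eps / B)); split=> // J z x [sJ zz0 zM] xB.
apply: gam_close_terms => // i iJ.
  have -> : npow b (z i) = npow b (z0 i) * npow b (z i - z0 i).
    by rewrite -npowD // addrC subrK.
  rewrite -mulrBr normrM ger0_norm ?absv_ge0 // -{2}[npow b (z0 i)]mulr1 -mulrBr normrM.
  rewrite ger0_norm ?npow_ge0 // mulrA.
  apply: le_lt_trans (_ : B * Z * `|npow b (z i - z0 i) - 1| < _).
    rewrite ler_wpM2r // ler_pM ?absv_ge0 ?npow_ge0 //.
    exact: (le_bigmax 1 (fun i => npow b (z0 i)) i).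
  by rewrite mulrC -ltr_pdivlMr ?mulr_gt0 // dl1 // zz0.
move=> niJ0; apply: le_lt_trans (_ : B * npow b (z i) < _).
  by rewrite ler_wpM2r ?npow_ge0.
rewrite mulrC -ltr_pdivlMr // -[eps / B](nlogK b_gt1) ?posrE ?divr_gt0 //.
by rewrite ltr_npow // zM.
Qed.

Lemma open_Scp_ball U g : open_Scp v q U -> U g ->
  exists k (xs : 'I_k -> 'cV[K]_n) (eps : R), 0 < eps /\ forall g', Scp v q g' ->
    (forall j, `|g' (xs j) - g (xs j)| < eps) -> U g'.
Proof.
case=> _ oU /oU [k [xs [Os [Osg OsU]]]].
have ball_Os j : exists e : R, 0 < e /\ forall r, `|r - g (xs j)| < e -> Os j r.
  have [oO Og] := Osg j; have /nbhs_ballP[e e0 eO] := oO _ Og.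
  by exists e; split=> // r gr; apply: eO; rewrite /ball /= distrC.
have [e e_ball] := choice ball_Os.
exists k, xs, (\big[Num.min/1]_j e j); split=> [|g' sg' g'g].
  by apply: lt_bigmin => // j _; case: (e_ball j).
apply: OsU => // j; apply: (e_ball j).2.
by apply: lt_le_trans (g'g j) _; exact: bigmin_le.
Qed.

Lemma Sc_close W J0 z0 :
  open_Sc v q W -> J0 != finset.set0 -> W (cls (gam (J0, z0))) ->
  exists dl M, 0 < dl /\ forall J z, close_to dl M J0 z0 J z -> W (cls (gam (J, z))).
Proof.
move=> [_ oW] J00 Wg.
have [k [xs [eps [eps0 epsW]]]] := open_Scp_ball oW (conj (@Scp_gam (J0, z0) J00) Wg).
pose B := \big[Num.max/1]_(j < k) \big[Num.max/1]_(i < n) av (xs j i 0).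
have xsB j i : av (xs j i 0) <= B.
  apply: le_trans (le_bigmax 1 (fun i => av (xs j i 0)) i) _.
  exact: (le_bigmax 1 (fun j => \big[Num.max/1]_(i < n) av (xs j i 0)) j).
have B0 : 0 < B by apply: lt_le_trans (bigmax_ge_id _ _ _ _).
have [dl [M [dl0 dlM]]] := gam_close J0 z0 B0 eps0.
exists dl, M; split=> // J z Jz; have [sJ _ _] := Jz.
have := epsW _ (@Scp_gam (J, z) (subset_neq0 sJ J00)).
by case=> // j; exact: dlM.
Qed.

Lemma phi_inv_close g (dl M : R) : Scp v q g -> 0 < dl ->
  exists Os : 'I_n -> set R, (forall i, open (Os i) /\ Os i (g (bas K i))) /\
    forall g', Scp v q g' -> (forall i, Os i (g' (bas K i))) ->
      close_to dl M (bsupp g) (bcoord g) (bsupp g') (bcoord g').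
Proof.
move=> sg dl0; exists (fun i => if i \in bsupp g
  then `]npow b (bcoord g i + dl), npow b (bcoord g i - dl)[%classic
  else `]-1, npow b M[%classic); split.
  move=> i; case: ifP => iJ; split; rewrite ?itv_open //= in_itv /=.
    by rewrite -bcoordK // !ltr_npow //; apply/andP; split; lra.
  by move: iJ; rewrite inE => /negbFE/eqP ->; rewrite npow_gt0 // andbT; lra.
move=> g' sg' Og'.
have sJ : bsupp g \subset bsupp g'.
  apply/fintype.subsetP => i iJ; have := Og' i; rewrite iJ /= in_itv /= => /andP[lo _].
  by rewrite inE gt_eqF // (lt_trans (npow_gt0 b_gt1 _) lo).
split=> // i iJ.
  have := Og' i; rewrite iJ /= in_itv /= -bcoordK //; last exact: (fintype.subsetP sJ).
  by rewrite !ltr_npow // ltr_norml => /andP[lo hi]; apply/andP; split; lra.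
move=> niJ; have := Og' i; rewrite (negPf niJ) /= in_itv /= -bcoordK //.
by rewrite ltr_npow // => /andP[].
Qed.

Lemma phi_continuous W :
  open_Sc v q W -> open_Abar (@Abar R n `&` @phi R K v q n @^-1` W).
Proof.
move=> oW; split=> [p [] //|p [Ap Wp]]; have [J0 _] := Ap.
have [dl [M [dl0 closeW]]] := Sc_close oW J0 Wp.
have [B [bB Bp Bclose]] := Abar_close_nbhd M Ap dl0.
exists B; do 2 split=> //; move=> -[J z] Bp'; split; first exact: baseAbar_sub bB _ Bp'.
by have [c /closeW] := Bclose _ Bp'; rewrite cls_gam_shift.
Qed.

Lemma phi_open W : open_Abar W -> open_Sc v q (@phi R K v q n @` W).
Proof.
move=> [WA oW]; split=> [_ [p /WA Ap <-]|]; first exact: Sc_phi.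
split=> [g [] //|g [sg [p Wp pg]]].
have pE : p = phi_inv g.
  by apply: phi_inj; [exact: WA | exact: Abar_phi_inv | rewrite pg phi_invK].
have [B [bB [Bp BW]]] := oW p Wp; rewrite pE in Bp.
have [dl [M [dl0 closeB]]] := baseAbar_contains_close bB Bp.
have [Os [Osg Oclose]] := phi_inv_close M sg dl0.
exists n, (@bas K n), Os; split=> // g' sg' Og'; split=> //.
by exists (phi_inv g'); [exact/BW/closeB/Oclose | exact: phi_invK].
Qed.

End Seminorms.

Theorem proposition3p2 (R : realType) (K : fieldType) (v : K -> int) (q : nat)
    (n : nat) :
  nonarch_local_field R v q ->
  (* phi : Abar -> S_c is a bijection ... *)
  ((forall p, @Abar R n p -> Sc v q (@phi R K v q n p)) /\
   (forall p p', @Abar R n p -> @Abar R n p' ->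
      @phi R K v q n p = @phi R K v q n p' -> p = p') /\
   (forall C, @Sc R K v q n C -> exists p, @Abar R n p /\ @phi R K v q n p = C)) /\
  (* ... which is continuous ... *)
  (forall W, @open_Sc R K v q n W ->
     @open_Abar R n (@Abar R n `&` @phi R K v q n @^-1` W)) /\
  (* ... and open, hence a homeomorphism ... *)
  (forall W, @open_Abar R n W -> @open_Sc R K v q n (@phi R K v q n @` W)) /\
  (* ... and N-equivariant. *)
  (forall (d : 'rV[K]_n) (s : 'S_n), (forall j, d 0 j != 0) ->
     forall p, @Abar R n p ->
       @phi R K v q n (@actA R K v n d s p) = @actS R K n d s (@phi R K v q n p)).
Proof.
case=> vM vD _ residue _; have q_gt1 := residue_card_gt1 vM vD residue.
split; [split; [|split]|split; [|split]].
- exact: Sc_phi.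
- exact: phi_inj.
- move=> C [g [sg ->]].
  by eexists; split; [exact: Abar_phi_inv sg | exact: phi_invK sg].
- exact: phi_continuous.
- exact: phi_open.
- by move=> d s d0 p _; exact: phi_actA.
Qed.
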